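(* Let $\nu\in\mathcal P^{(n)}_0$ be minimal and let $i\in\{1,\dots,n-1\}$ satisfy $\sigma_\nu^{-1}(i)<\sigma_\nu^{-1}(i+1)$. Let $\nu^{(i)}$ be the unique minimal partition in $\mathcal P^{(n)}_0$ with $\sigma_{\nu^{(i)}}=s_i\circ\sigma_\nu$, where $s_i=(i,i+1)\in\mathfrak S_n$. Then for every $j=1,\dots,n-1$, $$\beta_j(\nu^{(i)})=r_{\alpha_i}(\beta_j(\nu))\quad\text{or}\quad\beta_j(\nu^{(i)})=r_{\alpha_i}(\beta_j(\nu))+\delta.$$
   Context: Fix $n\ge3$. Root lattice: let $Q=\bigoplus_{i=0}^{n-1}\mathbb Z\alpha_i$ be the root lattice of $\widehat{\mathfrak{sl}}_n$, with indices of $\alpha$ taken mod $n$ (so $\alpha_n=\alpha_0$). Its bilinear form is $(\alpha_i,\alpha_j)=a_{ij}$, where $a_{ii}=2$, $a_{i,i\pm1}=-1$ and $a_{ij}=0$ otherwise (indices mod $n$). Let $\delta=\alpha_0+\dots+\alpha_{n-1}$ and $r_{\alpha_i}(\beta)=\beta-(\beta,\alpha_i)\alpha_i$. Colorless partitions: a partition $\nu$ is $n$-colorless if for every residue $i$ mod $n$ the number of boxes $(x,y)$ ($\nu_x\ge y$) with $x-y\equiv i$ is the same. Let $\nu'$ be the conjugate partition. Let $\mathcal P^{(n)}_0$ be the set of $n$-colorless partitions $\nu$ with $\nu_1\le n$ and $\nu'_n<n$. Associated data for $\nu\in\mathcal P^{(n)}_0$: - The values $\nu'_m+1-m$, $m=1,\dots,n$,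 are pairwise distinct mod $n$. Define $\sigma_\nu\in\mathfrak S_n$ by $\sigma_\nu(n-m+1)=\overline{\nu'_m+1-m}$, where $\overline a\in\{1,\dots,n\}$ denotes the representative of $a$ mod $n$. - For $i=1,\dots,n-1$ put $\beta_i(\nu)=\alpha_{\nu'_{i+1}-i}+\alpha_{\nu'_{i+1}-i+1}+\dots+\alpha_{\nu'_i-i}$, a sum of $\nu'_i-\nu'_{i+1}+1$ consecutive simple roots with indices mod $n$. Minimality: $\nu$ is called minimal if $\nu'_i<\nu'_{i+1}+n-1$ for all $i=1,\dots,n-1$. For each $\sigma\in\mathfrak S_n$ there is a unique minimal $\nu\in\mathcal P^{(n)}_0$ with $\sigma_\nu=\sigma$. *)

From HB Require Import structures.
From mathcomp Require Import all_boot all_order all_algebra.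
Unset Printing Implicit Defensive.
Import Order.TTheory GRing.Theory Num.Theory.

(* Partitions are seq nat: weakly decreasing list of positive parts;
   nu_x (1-indexed) is nth 0 nu (x-1). *)
Definition is_partition (nu : seq nat) : bool :=
  sorted geq nu && all (fun p => 0 < p) nu.

Definition conjp (nu : seq nat) (m : nat) : nat := count (fun p => m <= p) nu.

(* number of boxes (x,y) (1-indexed) with x - y = r mod n *)
Definition color_count (n : nat) (nu : seq nat) (r : nat) : nat :=
  (\sum_(x < size nu) \sum_(y < nth 0 nu x)
     ((((x%:Z - y%:Z) %% n%:Z)%Z == r%:Z)%R : nat))%N.

Definition colorless (n : nat) (nu : seq nat) : Prop :=
  forall r, r < n -> color_count n nu r = color_count n nu 0.

Definition P0 (n : nat) (nu : seq nat) : Prop :=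
  [/\ is_partition nu, colorless n nu, nth 0 nu 0 <= n & conjp nu n < n].

Definition minimal (n : nat) (nu : seq nat) : Prop :=
  forall i, 1 <= i <= n - 1 -> conjp nu i < conjp nu i.+1 + (n - 1).

Definition rep1 (n : nat) (a : int) : nat := (absz ((a - 1) %% n%:Z)%Z)%R.+1.

Definition sigma (n : nat) (nu : seq nat) (k : nat) : nat :=
  let m := (n - k + 1)%N in rep1 n ((conjp nu m)%:Z + 1 - m%:Z)%R.

Definition s_tr (i x : nat) : nat :=
  if x == i then i.+1 else if x == i.+1 then i else x.

Local Open Scope ring_scope.

(* Root lattice Q = Z^n with basis alpha_0..alpha_{n-1}; an element is its
   coefficient vector. alpha k for k : int is alpha_(k mod n). *)
Definition rootQ (n : nat) := {ffun 'I_n -> int}.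

Definition alpha (n : nat) (k : int) : rootQ n :=
  [ffun c : 'I_n => if ((k - (nat_of_ord c)%:Z) %% n%:Z)%Z == 0 then 1 else 0].

Definition delta (n : nat) : rootQ n := [ffun _ => 1].

(* Cartan matrix of affine sl_n (n >= 3) *)
Definition cartan (n : nat) (c d : 'I_n) : int :=
  if c == d then 2
  else if ((c.+1 %% n)%N == d) || ((d.+1 %% n)%N == c) then -1 else 0.

Definition bform (n : nat) (x y : rootQ n) : int :=
  \sum_(c : 'I_n) \sum_(d : 'I_n) x c * y d * cartan n c d.

Definition refl_alpha (n : nat) (i : int) (b : rootQ n) : rootQ n :=
  b - alpha n i *~ bform n b (alpha n i).

Definition beta (n : nat) (nu : seq nat) (j : nat) : rootQ n :=
  \sum_(s < (conjp nu j - conjp nu j.+1).+1)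
     alpha n ((conjp nu j.+1)%:Z - j%:Z + s%:Z).

From mathcomp Require Import all_boot all_order all_algebra zify ring.
Import Order.TTheory GRing.Theory Num.Theory.
Set Implicit Arguments.
Unset Strict Implicit.
Local Open Scope ring_scope.

(* Let F(t) in Q be the vector with coefficients floor((t - c) / n), c < n, so that
   alpha_(s+1) + ... + alpha_t = F(t) - F(s); with a_m = nu'_m - m this gives
   beta_j(nu) = F(a_j) - F(a_(j+1)).  The reflection r_(alpha_i) acts on the F(t)
   as the affine permutation of Z exchanging the residues i-1 and i mod n (up to an
   additive constant independent of t).  The hypothesis on sigma says that
   b_m = mu'_m - m has the residue of s_i(a_m), so b_m = s_i(a_m) + k_m n and
   beta_j(mu) = r_(alpha_i)(beta_j(nu)) + (k_j - k_(j+1)) delta.  Minimality puts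
   a_j - a_(j+1) and b_j - b_(j+1) in [1, n-1], and the ascent condition on sigma
   excludes the residue pattern moving this difference by 2, so k_j - k_(j+1) is
   0 or 1. *)

Lemma ffunDE (I : finType) (M : zmodType) (f g : {ffun I -> M}) x :
  (f + g) x = f x + g x.
Proof. by rewrite ffunE. Qed.

Lemma ffunBE (I : finType) (M : zmodType) (f g : {ffun I -> M}) x :
  (f - g) x = f x - g x.
Proof. by rewrite !ffunE. Qed.

Section Euclid.
Variable n : nat.
Hypothesis n_gt0 : (0 < n)%N.

Lemma divz_qr (q r : int) : 0 <= r < n%:Z -> ((q * n%:Z + r) %/ n%:Z)%Z = q.
Proof. by move=> r_range; rewrite divzMDl ?divz_small ?addr0 // eqz_nat -lt0n. Qed.

Lemma modz_qr (q r : int) : 0 <= r < n%:Z -> ((q * n%:Z + r) %% n%:Z)%Z = r.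
Proof. by move=> r_range; rewrite modzMDl modz_small. Qed.

Definition resz (x : int) : nat := `|(x %% n%:Z)%Z|%N.

Lemma reszE (x : int) : (resz x)%:Z = (x %% n%:Z)%Z.
Proof. by rewrite /resz gez0_abs // modz_ge0 // eqz_nat -lt0n. Qed.

Lemma resz_lt (x : int) : (resz x < n)%N.
Proof. by rewrite -ltz_nat reszE ltz_pmod // ltz_nat. Qed.

Lemma divz_resz (x : int) : x = (x %/ n%:Z)%Z * n%:Z + (resz x)%:Z.
Proof. by rewrite reszE -divz_eq. Qed.

Lemma int_qr (x : int) : exists q (r : nat), (r < n)%N /\ x = q * n%:Z + r%:Z.
Proof. by exists (x %/ n%:Z)%Z, (resz x); split; [exact: resz_lt | exact: divz_resz]. Qed.

Lemma divz_qr_subn (q : int) (r c : nat) : (r < n)%N -> (c < n)%N ->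
  ((q * n%:Z + r%:Z - c%:Z) %/ n%:Z)%Z = if (r < c)%N then q - 1 else q.
Proof.
move=> r_lt c_lt; case: ltnP => r_c.
- have -> : q * n%:Z + r%:Z - c%:Z = (q - 1) * n%:Z + (r%:Z + n%:Z - c%:Z) by lia.
  by rewrite divz_qr //; lia.
- have -> : q * n%:Z + r%:Z - c%:Z = q * n%:Z + (r%:Z - c%:Z) by lia.
  by rewrite divz_qr //; lia.
Qed.

Lemma modz_qr_subn (q : int) (r c : nat) : (r < n)%N -> (c < n)%N ->
  ((q * n%:Z + r%:Z - c%:Z) %% n%:Z == 0)%Z = (r == c).
Proof.
move=> r_lt c_lt; have [r_c|r_c] := ltnP r c.
- have -> : q * n%:Z + r%:Z - c%:Z = (q - 1) * n%:Z + (r%:Z + n%:Z - c%:Z) by lia.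
  by rewrite modz_qr; [apply/eqP/eqP; lia | lia].
- have -> : q * n%:Z + r%:Z - c%:Z = q * n%:Z + (r%:Z - c%:Z) by lia.
  by rewrite modz_qr; [apply/eqP/eqP; lia | lia].
Qed.

Lemma mulz_range01 (k : int) : 1 - n%:Z <= k * n%:Z <= n%:Z -> k = 0 \/ k = 1.
Proof.
move=> k_range; have [k_le|k_gt] := leP k (-1); first by nia.
have [k_ge|k_lt] := leP 2 k; first by nia.
lia.
Qed.

End Euclid.

Lemma conjpS_le (s : seq nat) (m : nat) : (conjp s m.+1 <= conjp s m)%N.
Proof. by apply: sub_count => p /= /ltnW. Qed.

Lemma refl_alphaB (n : nat) (k : int) (x y : rootQ n) :
  refl_alpha n k (x - y) = refl_alpha n k x - refl_alpha n k y.
Proof.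
have bformB : bform n (x - y) (alpha n k) = bform n x (alpha n k) - bform n y (alpha n k).
  rewrite /bform -sumrB; apply: eq_bigr => c _; rewrite -sumrB.
  by apply: eq_bigr => d _; rewrite !ffunE !mulrBl.
by rewrite /refl_alpha bformB mulrzBr !opprB addrACA [RHS]addrACA (addrC (- y)).
Qed.

Section RootLattice.
Variable n : nat.
Hypothesis n_gt0 : (0 < n)%N.

Definition floorQ (t : int) : rootQ n := [ffun c : 'I_n => ((t - c%:Z) %/ n%:Z)%Z].

Lemma floorQ_qr (q : int) (r : nat) (c : 'I_n) : (r < n)%N ->
  floorQ (q * n%:Z + r%:Z) c = if (r < c)%N then q - 1 else q.
Proof. by move=> r_lt; rewrite ffunE divz_qr_subn. Qed.

Lemma floorQ_shift (x k : int) : floorQ (x + k * n%:Z) = floorQ x + delta n *~ k.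
Proof.
apply/ffunP => c; rewrite !ffunE ffunMzE ffunE intz addrAC addrC divzMDl; first exact: addrC.
by apply/eqP; lia.
Qed.

Lemma alpha_qr (q : int) (r : nat) (c : 'I_n) : (r < n)%N ->
  alpha n (q * n%:Z + r%:Z) c = if r == c then 1 else 0.
Proof. by move=> r_lt; rewrite ffunE modz_qr_subn. Qed.

Lemma alpha_ord (i c : 'I_n) : alpha n i c = if c == i then 1 else 0.
Proof. by rewrite -[i%:Z]add0r -(mul0r n%:Z) alpha_qr // eq_sym. Qed.

Lemma alpha_floorQ (k : int) : alpha n k = floorQ k - floorQ (k - 1).
Proof.
apply/ffunP => c; have := ltn_ord c; have [q [r [r_lt ->]]] := int_qr n_gt0 k.
case: r r_lt => [|r] r_lt c_lt.
- have -> : q * n%:Z + 0%:Z - 1 = (q - 1) * n%:Z + n.-1%:Z by lia.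
  rewrite ffunBE alpha_qr // !floorQ_qr //; last by lia.
  by repeat case: ifP => ?; lia.
- have -> : q * n%:Z + r.+1%:Z - 1 = q * n%:Z + r%:Z by lia.
  rewrite ffunBE alpha_qr // !floorQ_qr //; last by lia.
  by repeat case: ifP => ?; lia.
Qed.

Lemma sum_alpha (p : int) (L : nat) :
  \sum_(s < L) alpha n (p + s%:Z) = floorQ (p + L%:Z - 1) - floorQ (p - 1).
Proof.
elim: L => [|L IH]; first by rewrite big_ord0 addr0 subrr.
rewrite big_ord_recr /= IH alpha_floorQ.
have -> : p + L.+1%:Z - 1 = p + L%:Z by lia.
by rewrite addrC addrA subrK.
Qed.

Lemma beta_floorQ (s : seq nat) (j : nat) :
  beta n s j = floorQ ((conjp s j)%:Z - j%:Z) - floorQ ((conjp s j.+1)%:Z - j.+1%:Z).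
Proof.
rewrite /beta sum_alpha; have := conjpS_le s j.
by move=> conj_le; congr (_ - _); congr floorQ; lia.
Qed.

End RootLattice.

Lemma val_ordS (n : nat) (i : 'I_n) :
  nat_of_ord (ordS i) = if i.+1 == n then 0%N else i.+1.
Proof.
rewrite /=; case: eqP => [->|i_ne]; first by rewrite modnn.
by rewrite modn_small //; have := ltn_ord i; lia.
Qed.

Lemma val_ord_pred (n : nat) (i : 'I_n) : (0 < i)%N -> nat_of_ord (ord_pred i) = i.-1.
Proof.
case: i => [[|k] k_lt] //= _.
by rewrite modnDr modn_small // ltnW.
Qed.

Section Cartan.
Variable n : nat.
Hypothesis n_gt2 : (2 < n)%N.

Lemma ordS_neq (i : 'I_n) : ordS i != i.
Proof.
apply/eqP => /(congr1 (@nat_of_ord n)); rewrite val_ordS /=; have := ltn_ord i.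
by case: ifP => /eqP; lia.
Qed.

Lemma ordS2_neq (i : 'I_n) : ordS (ordS i) != i.
Proof.
apply/eqP => /(congr1 (@nat_of_ord n)); rewrite !val_ordS /=; have := ltn_ord i.
by repeat case: ifP => /eqP; lia.
Qed.

Lemma cartan_col (c i : 'I_n) : cartan n c i =
  (if c == i then 2 else 0) - (if c == ord_pred i then 1 else 0)
  - (if c == ordS i then 1 else 0).
Proof.
have predE : ((c.+1 %% n)%N == i) = (c == ord_pred i) :=
  can2_eq (@ordSK n) (@ord_predK n) c i.
have succE : ((i.+1 %% n)%N == c) = (c == ordS i) := eq_sym (ordS i) c.
have pred_neq : ord_pred i != i.
  by rewrite (can2_eq (@ord_predK n) (@ordSK n)) eq_sym ordS_neq.
have pred_succ_neq : ord_pred i != ordS i.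
  by rewrite (can2_eq (@ord_predK n) (@ordSK n)) eq_sym ordS2_neq.
rewrite /cartan predE succE.
have [->|c_i] := eqVneq c i.
  by rewrite eq_sym (negbTE pred_neq) eq_sym (negbTE (ordS_neq i)).
have [->|c_p] := eqVneq c (ord_pred i); first by rewrite (negbTE pred_succ_neq).
by case: eqP.
Qed.

Lemma bform_alpha (b : rootQ n) (i : 'I_n) :
  bform n b (alpha n i) = 2 * b i - b (ord_pred i) - b (ordS i).
Proof.
have n_gt0 : (0 < n)%N by exact: ltn_trans n_gt2.
have pick (k : 'I_n) (z : int) : \sum_c b c * (if c == k then z else 0) = b k * z.
  by rewrite (bigD1 k) //= eqxx big1 ?addr0 // => c /negbTE ->; rewrite mulr0.
rewrite /bform; under eq_bigr => c _.
  rewrite (bigD1 i) //= (alpha_ord n_gt0) eqxx mulr1 big1 ?addr0; last first.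
    by move=> d /negbTE d_i; rewrite (alpha_ord n_gt0) d_i mulr0 mul0r.
  rewrite cartan_col !mulrBr; over.
by rewrite !sumrB !pick !mulr1 mulrC.
Qed.

End Cartan.

Definition swap_res (i r : nat) : nat :=
  if r == i.-1 then i else if r == i then i.-1 else r.

Definition reflZ (n i : nat) (x : int) : int :=
  (x %/ n%:Z)%Z * n%:Z + (swap_res i (resz n x))%:Z.

Lemma swap_resE (i r : nat) : (0 < i)%N ->
  r = i.-1 /\ swap_res i r = i \/ r = i /\ swap_res i r = i.-1 \/
  r <> i.-1 /\ r <> i /\ swap_res i r = r.
Proof. by rewrite /swap_res; case: (r =P i.-1); case: (r =P i); lia. Qed.

Lemma swap_res_lt (n i r : nat) : (i < n)%N -> (r < n)%N -> (swap_res i r < n)%N.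
Proof. by rewrite /swap_res; repeat case: ifP => /eqP; lia. Qed.

Section AffineSwap.
Variables (n i : nat).
Hypothesis n_gt0 : (0 < n)%N.

Lemma reflZ_qr (q : int) (r : nat) : (r < n)%N ->
  reflZ n i (q * n%:Z + r%:Z) = q * n%:Z + (swap_res i r)%:Z.
Proof. by move=> r_lt; rewrite /reflZ /resz divz_qr ?modz_qr //; lia. Qed.

Lemma reflZ_eq_mod (x y : int) : resz n y = swap_res i (resz n x) ->
  y = reflZ n i x + ((y %/ n%:Z)%Z - (x %/ n%:Z)%Z) * n%:Z.
Proof. by move=> res_y; rewrite /reflZ -res_y {1}(divz_resz n_gt0 y); ring. Qed.

Lemma reflZ_sub_range (x y : int) :
  (0 < i)%N -> ~ (resz n x = i.-1 /\ resz n y = i) ->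
  -2 <= (reflZ n i x - reflZ n i y) - (x - y) <= 1.
Proof.
move=> i_gt0 not_descent.
have := divz_resz n_gt0 x; have := divz_resz n_gt0 y; rewrite /reflZ /swap_res.
by repeat case: ifP => /eqP ?; lia.
Qed.

End AffineSwap.

Section Reflection.
Variable n : nat.
Hypothesis n_gt2 : (2 < n)%N.
Variable i : 'I_n.
Hypothesis i_gt0 : (0 < i)%N.

Let n_gt0 : (0 < n)%N. Proof. exact: ltn_trans n_gt2. Qed.

Lemma refl_floorQ (x : int) :
  refl_alpha n i (floorQ n x) =
  floorQ n (reflZ n i x) + alpha n i *~ (if i.+1 == n then 1 else 0).
Proof.
apply/ffunP => c; have [q [r [r_lt ->]]] := int_qr n_gt0 x.
rewrite (reflZ_qr _ n_gt0) // /refl_alpha (bform_alpha n_gt2).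
rewrite ffunBE ffunDE !ffunMzE !mulrzz.
rewrite (alpha_ord n_gt0) !(floorQ_qr n_gt0) ?(swap_res_lt (ltn_ord i) r_lt) //.
rewrite val_ordS (val_ord_pred i_gt0).
have := swap_resE r i_gt0; have := ltn_ord c; have := ltn_ord i.
rewrite -val_eqE -!subn1 /=; case: (i.+1 =P n) => [i_last|i_nlast] /=.
  all: by repeat case: ifP => /eqP ?; lia.
Qed.

Lemma refl_floorQB (x y : int) :
  refl_alpha n i (floorQ n x - floorQ n y) =
  floorQ n (reflZ n i x) - floorQ n (reflZ n i y).
Proof. by rewrite refl_alphaB !refl_floorQ opprD addrACA subrr addr0. Qed.

Lemma floorQB_reflZ (x1 x2 y1 y2 : int) :
  resz n y1 = swap_res i (resz n x1) -> resz n y2 = swap_res i (resz n x2) ->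
  ~ (resz n x1 = i.-1 /\ resz n x2 = i) ->
  1 <= x1 - x2 <= n%:Z - 1 -> 1 <= y1 - y2 <= n%:Z - 1 ->
  floorQ n y1 - floorQ n y2 = refl_alpha n i (floorQ n x1 - floorQ n x2) \/
  floorQ n y1 - floorQ n y2 = refl_alpha n i (floorQ n x1 - floorQ n x2) + delta n.
Proof.
move=> res_y1 res_y2 no_descent gap_x gap_y.
have y1E := reflZ_eq_mod n_gt0 res_y1; have y2E := reflZ_eq_mod n_gt0 res_y2.
have refl_gap := reflZ_sub_range n_gt0 i_gt0 no_descent.
set k1 := ((y1 %/ n%:Z)%Z - (x1 %/ n%:Z)%Z) in y1E.
set k2 := ((y2 %/ n%:Z)%Z - (x2 %/ n%:Z)%Z) in y2E.
have k01 : k1 - k2 = 0 \/ k1 - k2 = 1.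
  by apply: (mulz_range01 n_gt0); rewrite mulrBl; lia.
rewrite refl_floorQB y1E y2E !(floorQ_shift n_gt0) opprD addrACA -mulrzBr.
by case: k01 => ->; [left; rewrite mulr0z addr0 | right].
Qed.

End Reflection.

Lemma s_tr_swap_res (i r : nat) : (0 < i)%N -> s_tr i r.+1 = (swap_res i r).+1.
Proof. by move=> i_gt0; rewrite /s_tr /swap_res; repeat case: ifP => /eqP; lia. Qed.

Lemma sigma_resz (n : nat) (s : seq nat) (m : nat) : (1 <= m <= n)%N ->
  sigma n s (n - m + 1) = (resz n ((conjp s m)%:Z - m%:Z)).+1.
Proof.
move=> m_range; rewrite /sigma /rep1 /resz.
have -> : (n - (n - m + 1) + 1 = m)%N by lia.
by do 3 f_equal; lia.
Qed.

Lemma minimal_gap (n : nat) (s : seq nat) (j : nat) :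
  minimal n s -> (1 <= j <= n - 1)%N ->
  1 <= ((conjp s j)%:Z - j%:Z) - ((conjp s j.+1)%:Z - j.+1%:Z) <= n%:Z - 1.
Proof. by move=> min_s /min_s; have := conjpS_le s j; lia. Qed.

Lemma sigma_s_tr_resz (n i : nat) (nu mu : seq nat) (m : nat) : (0 < i)%N ->
  (forall k : nat, (1 <= k <= n)%N -> sigma n mu k = s_tr i (sigma n nu k)) ->
  (1 <= m <= n)%N ->
  resz n ((conjp mu m)%:Z - m%:Z) = swap_res i (resz n ((conjp nu m)%:Z - m%:Z)).
Proof.
move=> i_gt0 sigma_mu m_range; apply: succn_inj.
by rewrite -s_tr_swap_res // -!sigma_resz // sigma_mu //; lia.
Qed.

Lemma sigma_ascent_resz (n i : nat) (nu : seq nat) (j : nat) :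
  (forall a b : nat, (1 <= a <= n)%N -> (1 <= b <= n)%N ->
     sigma n nu a = i -> sigma n nu b = i.+1 -> (a < b)%N) ->
  (0 < i)%N -> (1 <= j <= n - 1)%N ->
  ~ (resz n ((conjp nu j)%:Z - j%:Z) = i.-1 /\ resz n ((conjp nu j.+1)%:Z - j.+1%:Z) = i).
Proof.
move=> ascent i_gt0 j_range [res_j res_j1].
by have := ascent (n - j + 1)%N (n - j.+1 + 1)%N; rewrite !sigma_resz ?res_j ?res_j1; lia.
Qed.

Theorem mainTheorem12 (n : nat) (hn : (3 <= n)%N) (nu mu : seq nat) (i : nat) :
  P0 n nu -> minimal n nu ->
  (1 <= i <= n - 1)%N ->
  (* sigma_nu^{-1}(i) < sigma_nu^{-1}(i+1) *)
  (forall a b : nat, (1 <= a <= n)%N -> (1 <= b <= n)%N ->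
     sigma n nu a = i -> sigma n nu b = i.+1 -> (a < b)%N) ->
  (* mu = nu^{(i)}: minimal, in P0, with sigma_mu = s_i o sigma_nu *)
  P0 n mu -> minimal n mu ->
  (forall k : nat, (1 <= k <= n)%N -> sigma n mu k = s_tr i (sigma n nu k)) ->
  forall j : nat, (1 <= j <= n - 1)%N ->
    beta n mu j = refl_alpha n (i%:Z) (beta n nu j) \/
    beta n mu j = refl_alpha n (i%:Z) (beta n nu j) + delta n.
Proof.
move=> _ min_nu i_range ascent _ min_mu sigma_mu j j_range.
have n_gt0 : (0 < n)%N by lia.
have i_lt : (i < n)%N by lia.
have i_gt0 : (0 < i)%N by lia.
rewrite !(beta_floorQ n_gt0).
apply: (@floorQB_reflZ n hn (Ordinal i_lt) i_gt0).
- by apply: (sigma_s_tr_resz i_gt0 sigma_mu); lia.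
- by apply: (sigma_s_tr_resz i_gt0 sigma_mu); lia.
- exact: sigma_ascent_resz.
- exact: minimal_gap.
- exact: minimal_gap.
Qed.
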